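(* Let $n\ge 1$ and let $E,F$ be tagged edges of the punctured $(n,\infty)$-gon $\mathcal{P}_{n,\infty}$. Then $(E,F)$ is an elementary move if and only if $(\tau F, E)$ is an elementary move.
   Context: $\mathcal{P}_{n,\infty}$: the closed unit disk $D\subset\mathbb{R}^2$ with a puncture (marked point) at the origin and boundary marked points labeled $(h,a)$, $h\in\{1,\dots,n\}$, $a\in\mathbb{Z}$, arranged on $\partial D$ so that, going counterclockwise, the points of block $h$ appear in increasing order of $a$, the blocks appear in the cyclic order $1,2,\dots,n$, and the marked points accumulate from both sides exactly at $n$ unmarked points $a_1,\dots,a_n\in\partial D$, with $a_h$ lying between block $h$ and block $h+1$ (indices mod $n$); there are no one-sided accumulation points. For a boundary marked point $P=(h,a)$ write $P^+=(h,a+1)$, $P^-=(h,a-1)$, $P^{++}=(h,a+2)$. Tagged edges: for each ordered pair of distinct boundary marked points $P\neq Q$ with $Q\neq P^+$, the edge $E_{P,Q}$ is the homotopy class (in $D$ minus the puncture, relative endpoints) of a non-self-crossing path from $P$ to $Q$ through the interior of $D$ minus the puncture, homotopic to the counterclockwise boundary path from $P$ to $Q$; and for each boundary marked point $P$ there are two tagged edges $E^{+1}_{P,P}$ and $E^{-1}_{P,P}$, each drawn as the segment from $P$ to the puncture (tagged if the sign is $-1$). Translation: $\tau(E_{P,Q})=E_{P^+,Q^+}$ for $P\neq Q$, and $\tau(E^{\epsilon}_{P,P})=E^{-\epsilon}_{P^+,P^+}$. Elementary move: a pair $(E,F)$ of distinct tagged edges such that one of the following holds, with $P=(h_1,a_1)$,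 $Q=(k_1,b_1)$: (i) if $E=E_{P,Q}$ with $Q=P^{++}$, then $F=E_{P^-,Q}$; (ii) if $E=E_{P,Q}$ with $h_1\ne k_1$, or with $h_1=k_1$ and $Q$ lying (in the cyclic order starting at $P$) at or after $P^{+++}=(h_1,a_1+3)$ and strictly before $P^-$, then $F=E_{P^-,Q}$ or $F=E_{P,Q^-}$; (iii) if $E=E_{P,Q}$ with $Q=P^-$, then $F=E_{P,Q^-}$ or $F=E^{+1}_{Q,Q}$ or $F=E^{-1}_{Q,Q}$; (iv) if $E=E^{\epsilon}_{P,P}$, then $F=E_{P,P^-}$. *)

From mathcomp Require Import all_boot.
From Stdlib Require Import ZArith.

Set Implicit Arguments.
Unset Strict Implicit.
Unset Printing Implicit Defensive.

Local Open Scope Z_scope.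

(* Boundary marked point (h,a): block h (blocks 1..n indexed here by 'I_n,
   i.e. 0-based; only equality of blocks and their cyclic order matter), a : Z. *)
Definition bpoint (n : nat) : Type := ('I_n * Z)%type.

(* (h,a) |-> (h,a+k);  P^+ = shift P 1, P^- = shift P (-1), P^{++} = shift P 2 *)
Definition shift {n : nat} (P : bpoint n) (k : Z) : bpoint n := (P.1, P.2 + k).

(* Sign of a tag: Pos = +1 (plain), Neg = -1 (tagged). *)
Inductive tsign : Type := Pos | Neg.
Definition sneg (e : tsign) : tsign := match e with Pos => Neg | Neg => Pos end.

(* Raw tagged edges: Arc P Q stands for E_{P,Q} (P <> Q), Tg e P for E^e_{P,P}. *)
Inductive tedge (n : nat) : Type :=
| Arc : bpoint n -> bpoint n -> tedge n
| Tg  : tsign -> bpoint n -> tedge n.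
Arguments Arc {n} _ _.
Arguments Tg {n} _ _.

Definition is_tedge {n : nat} (E : tedge n) : Prop :=
  match E with
  | Arc P Q => P <> Q /\ Q <> shift P 1
  | Tg _ _ => True
  end.

Definition tau {n : nat} (E : tedge n) : tedge n :=
  match E with
  | Arc P Q => Arc (shift P 1) (shift Q 1)
  | Tg e P => Tg (sneg e) (shift P 1)
  end.

(* Condition of case (ii) for E_{P,Q}, P=(h1,a1), Q=(k1,b1):
   h1 <> k1, or h1 = k1 and Q lies, in the counterclockwise cyclic order starting
   at P, at or after P^{+++} and strictly before P^-.  Going counterclockwise from
   P = (h1,a1) one meets (h1,a1+1), (h1,a1+2), ... , the other blocks, and then
   (h1,b) for b < a1 in increasing order, ending with P^- = (h1,a1-1). *)
Definition case_ii_cond {n : nat} (P Q : bpoint n) : Prop :=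
  P.1 <> Q.1 \/ (P.1 = Q.1 /\ (P.2 + 3 <= Q.2 \/ Q.2 <= P.2 - 2)).

Definition elem_move {n : nat} (E F : tedge n) : Prop :=
  E <> F /\
  match E with
  | Arc P Q =>
      (Q = shift P 2 /\ F = Arc (shift P (-1)) Q)
   \/ (case_ii_cond P Q /\
        (F = Arc (shift P (-1)) Q \/ F = Arc P (shift Q (-1))))
   \/ (Q = shift P (-1) /\
        (F = Arc P (shift Q (-1)) \/ F = Tg Pos Q \/ F = Tg Neg Q))
  | Tg e P =>
      F = Arc P (shift P (-1))
  end.

(** An elementary move has one of four shapes: lower the source of an arc
   [E_{P,Q}] to [P^-], lower its target to [Q^-], pass from [E_{P,P^-}] to a
   tagged edge at [P^-], or pass from a tagged edge at [P] to [E_{P,P^-}].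
   Sending [(E,F)] to [(tau F, E)] exchanges the first two shapes and the last
   two.  The side conditions agree because, inside one block, the source of
   [E_{P,Q}] may be lowered iff [Q] is at distance at least 2 from [P], and the
   target iff [Q^-] is. *)
From Stdlib Require Import ZArith Lia.
From mathcomp Require Import all_boot.
(* Imported last, so that [shift] does not denote [Zpower.shift]. *)

Set Implicit Arguments.
Unset Strict Implicit.
Unset Printing Implicit Defensive.

Local Open Scope Z_scope.

Section Moves.

Variable n : nat.
Implicit Types (P Q : bpoint n) (E F : tedge n) (e : tsign).

Lemma shift_predK P : shift (shift P (-1)) 1 = P.
Proof. by case: P => h a; rewrite /shift /=; congr (_, _); lia. Qed.

Lemma shift_succK P : shift (shift P 1) (-1) = P.
Proof. by case: P => h a; rewrite /shift /=; congr (_, _); lia. Qed.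

Lemma shift_id P (k : Z) : shift P k = P -> k = 0.
Proof. by case: P => h a [] /=; lia. Qed.

Lemma snegK : involutive sneg.
Proof. by case. Qed.

Lemma tau_eq_Arc F P Q : tau F = Arc P Q -> F = Arc (shift P (-1)) (shift Q (-1)).
Proof. by case: F => [R S|f R] //= [<- <-]; rewrite !shift_succK. Qed.

Lemma tau_eq_Tg F e P : tau F = Tg e P -> F = Tg (sneg e) (shift P (-1)).
Proof. by case: F => [R S|f R] //= [<- <-]; rewrite snegK shift_succK. Qed.

Definition source_movable P Q := Q = shift P 2 \/ case_ii_cond P Q.
Definition target_movable P Q := case_ii_cond P Q \/ Q = shift P (-1).

Lemma source_movableE P Q :
  source_movable P Q <-> (P.1 = Q.1 -> Q.2 <= P.2 - 2 \/ P.2 + 2 <= Q.2).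
Proof.
case: P Q => [h a] [k b]; rewrite /source_movable /case_ii_cond /shift /=.
case: (eqVneq h k) => [<-|/eqP hk]; last by split=> // _; right; left.
rewrite pair_equal_spec; split=> [|/(_ erefl) b_range]; first by intuition lia.
by case: (Z.eq_dec b (a + 2)) => b_eq; [left | right; right; split=> //; lia].
Qed.

Lemma target_movableE P Q :
  target_movable P Q <-> (P.1 = Q.1 -> Q.2 <= P.2 - 1 \/ P.2 + 3 <= Q.2).
Proof.
case: P Q => [h a] [k b]; rewrite /target_movable /case_ii_cond /shift /=.
case: (eqVneq h k) => [<-|/eqP hk]; last by split=> // _; left; left.
rewrite pair_equal_spec; split=> [|/(_ erefl) b_range]; first by intuition lia.
by case: (Z.eq_dec b (a + -1)) => b_eq; [right | left; right; split=> //; lia].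
Qed.

Lemma target_movable_succr P Q : target_movable P (shift Q 1) <-> source_movable P Q.
Proof.
rewrite target_movableE source_movableE /=.
by split=> H /H; lia.
Qed.

Lemma source_movable_succl P Q : source_movable (shift P 1) Q <-> target_movable P Q.
Proof.
rewrite target_movableE source_movableE /=.
by split=> H /H; lia.
Qed.

Inductive move : tedge n -> tedge n -> Prop :=
| move_source P Q of source_movable P Q : move (Arc P Q) (Arc (shift P (-1)) Q)
| move_target P Q of target_movable P Q : move (Arc P Q) (Arc P (shift Q (-1)))
| move_to_puncture e P : move (Arc P (shift P (-1))) (Tg e (shift P (-1)))
| move_from_puncture e P : move (Tg e P) (Arc P (shift P (-1))).

Lemma elem_moveE E F : elem_move E F <-> move E F.
Proof.
split.
  case: E => [P Q|e P] [_]; last by move->; apply: move_from_puncture.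
  case=> [[-> ->]|[[ii [->|->]]|[-> [->|[->|->]]]]].
  - by apply: move_source; left.
  - by apply: move_source; right.
  - by apply: move_target; left.
  - by apply: move_target; right.
  - exact: move_to_puncture.
  - exact: move_to_puncture.
case=> [P Q ok|P Q ok|e P|e P]; split=> //=.
- by case=> /esym/shift_id.
- by case: ok => [->|ii]; [left | right; left; split=> //; left].
- by case=> /esym/shift_id.
- case: ok => [ii|->]; first by right; left; split=> //; right.
  by right; right; split=> //; left.
- by right; right; split=> //; case: e; [right; left | right; right].
Qed.

Lemma move_tau E F : move E F -> move (tau F) E.
Proof.
case=> [P Q ok|P Q ok|e P|e P] /=; rewrite ?shift_predK.
- by move/target_movable_succr/move_target: ok; rewrite shift_succK.
- by move/source_movable_succl/move_source: ok; rewrite shift_succK.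
- exact: move_from_puncture.
- by have := move_to_puncture e (shift P 1); rewrite shift_succK.
Qed.

Lemma tau_move E F : move (tau F) E -> move E F.
Proof.
move eG: (tau F) => G mv.
case: mv eG => [P Q ok|P Q ok|e P|e P]; [move/tau_eq_Arc->..|move/tau_eq_Tg->].
- by apply/move_target/source_movable_succl; rewrite shift_predK.
- by apply/move_source/target_movable_succr; rewrite shift_predK.
- exact: move_from_puncture.
- exact: move_to_puncture.
Qed.

End Moves.

Theorem lemma4p1 (n : nat) (hn : (0 < n)%N) (E F : tedge n) :
  is_tedge E -> is_tedge F ->
  (elem_move E F <-> elem_move (tau F) E).
Proof.
move=> _ _; rewrite !elem_moveE.
by split; [apply: move_tau | apply: tau_move].
Qed.
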